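(* Let $D=\operatorname{diag}(d_1,\dots,d_n)$ with $d_i>0$, $Q=\operatorname{diag}(q_1,\dots,q_n)$ with $q_i>0$, $1\le p\le\infty$, and $L\in\mathbb{R}^{N\times N}$ symmetric with $L\mathbf{1}=0$. Then $\mu_{p,Q}(-L\otimes D)=\mu_p(-L\otimes D)$.
   Context: On $\mathbb{R}^{nN}$, with $u=(u_1^T,\dots,u_N^T)^T$, $u_i\in\mathbb{R}^n$, define $\|u\|_{p,Q}=\big\|(\|Qu_1\|_p,\dots,\|Qu_N\|_p)^T\big\|_p$. For a norm $\|\cdot\|$, the induced logarithmic norm is $\mu(A)=\lim_{h\to0^+}\frac1h(\|I+hA\|-1)$ with the induced operator norm; $\mu_{p,Q}$ and $\mu_p$ are those induced by $\|\cdot\|_{p,Q}$ and the standard $p$-norm on $\mathbb{R}^{nN}$. *)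

From HB Require Import structures.
From mathcomp Require Import all_boot all_order all_algebra.
From mathcomp Require Import all_classical all_reals all_analysis.
From mathcomp Require Import mxtens.
Set Implicit Arguments. Unset Strict Implicit. Unset Printing Implicit Defensive.
Import Order.TTheory GRing.Theory Num.Theory.
Import numFieldNormedType.Exports.
Local Open Scope ring_scope.
Local Open Scope classical_set_scope.

Section Defs.
Variable R : realType.

(* Standard p-norm on R^m, p in [1, +oo] represented as an extended real.
   (The -oo branch is never used: statements assume 1 <= p.) *)
Definition pnorm (p : \bar R) (m : nat) (v : 'I_m -> R) : R :=
  match p with
  | r%:E => (\sum_(i < m) `|v i| `^ r) `^ r^-1
  | _ => \big[Num.max/0]_(i < m) `|v i|
  end.

Definition vpnorm (p : \bar R) (m : nat) (u : 'cV[R]_m) : R :=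
  pnorm p (fun i => u i 0).

(* the i-th block u_i in R^n of u in R^(N n), u = (u_1^T,...,u_N^T)^T *)
Definition blk (N n : nat) (u : 'cV[R]_(N * n)) (i : 'I_N) : 'cV[R]_n :=
  \col_(j < n) u (mxtens_index (i, j)) 0.

Definition pQnorm (p : \bar R) (N n : nat) (Q : 'M[R]_n)
    (u : 'cV[R]_(N * n)) : R :=
  pnorm p (fun i : 'I_N => vpnorm p (Q *m blk u i)).

Definition opnorm (m : nat) (nrm : 'cV[R]_m -> R) (A : 'M[R]_m) : R :=
  sup [set nrm (A *m x) / nrm x | x in [set x : 'cV[R]_m | x != 0]].

Definition lognorm (m : nat) (nrm : 'cV[R]_m -> R) (A : 'M[R]_m) : R :=
  lim ((fun h : R => (opnorm nrm (1%:M + h *: A) - 1) / h) @ 0^'+).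

End Defs.

From HB Require Import structures.
From mathcomp Require Import all_boot all_order all_algebra.
From mathcomp Require Import all_classical all_reals all_analysis.
From mathcomp Require Import mxtens.
Import Order.TTheory GRing.Theory Num.Theory.
Import numFieldNormedType.Exports.
Local Open Scope ring_scope.

(* The norm ||.||_{p,Q} is the plain p-norm composed with the block-diagonal
   scaling W = I ⊗ Q, since a p-norm of p-norms over a partition of the index
   set is the p-norm over the whole index set.  Hence the operator norm of any
   matrix commuting with W is the same for both norms, and I + h(-L ⊗ D) commutes
   with W because D and Q are both diagonal. *)

Set Implicit Arguments. Unset Strict Implicit.

Lemma tens1mx1 (R : comPzRingType) (m n : nat) :
  (1%:M : 'M[R]_m) *t (1%:M : 'M[R]_n) = 1%:M.
Proof.
apply/matrixP => k l.
case: (mxtens_indexP k) => i j; case: (mxtens_indexP l) => i' j'.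
by rewrite tensmxE !mxE (inj_eq (can_inj (@mxtens_indexK _ _))) xpair_eqE -natrM mulnb.
Qed.

Lemma tens1mx_unit (R : comUnitRingType) (m n : nat) (B : 'M[R]_n) :
  B \in unitmx -> (1%:M : 'M[R]_m) *t B \in unitmx.
Proof.
move=> uB; suff /mulmx1_unit[] : (1%:M *t invmx B) *m ((1%:M : 'M[R]_m) *t B) = 1%:M.
  by [].
by rewrite tensmx_mul mulmx1 mulVmx // tens1mx1.
Qed.

Section BlockNorms.
Variable R : realType.

Lemma pnorm_mxtens (p : \bar R) (N n : nat) (f : 'I_(N * n) -> R) :
  (1 <= p)%E ->
  pnorm p f = pnorm p (fun i => pnorm p (fun j => f (mxtens_index (i, j)))).
Proof.
case: p => [r| |] //= hr.
- rewrite lee_fin in hr; have r0 : r != 0 by rewrite gt_eqF // (lt_le_trans ltr01 hr).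
  congr (_ `^ _).
  transitivity (\sum_(i < N) \sum_(j < n) `|f (mxtens_index (i, j))| `^ r).
    rewrite pair_big (reindex (@mxtens_index N n)) /=; first by apply: eq_bigr => -[].
    by exists (@mxtens_unindex N n) => k _; rewrite (mxtens_indexK, mxtens_unindexK).
  apply: eq_bigr => i _.
  rewrite ger0_norm ?powR_ge0 // -powRrM mulVf // powRr1 //.
  by apply: sumr_ge0 => j _; apply: powR_ge0.
- have bigmax_ge0 (I : finType) (F : I -> R) : 0 <= \big[Num.max/0]_(i : I) `|F i|.
    by apply: (big_ind (fun x : R => 0 <= x)) => // x y hx hy; rewrite le_max hx.
  apply/le_anti/andP; split.
  + apply: bigmax_le => // k _; case: (mxtens_indexP k) => i j.
    apply: le_trans (le_bigmax _ _ i).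
    rewrite [X in _ <= X]ger0_norm ?bigmax_ge0 //.
    exact: (le_bigmax _ (fun j => `|f (mxtens_index (i, j))|) j).
  + apply: bigmax_le => // i _.
    rewrite [X in X <= _]ger0_norm ?bigmax_ge0 //.
    apply: bigmax_le => // j _.
    exact: (le_bigmax _ (fun k => `|f k|) (mxtens_index (i, j))).
Qed.

Lemma vpnorm_blk (p : \bar R) (N n : nat) (u : 'cV[R]_(N * n)) :
  (1 <= p)%E -> vpnorm p u = pnorm p (fun i => vpnorm p (blk u i)).
Proof.
move=> hp; rewrite /vpnorm (pnorm_mxtens _ hp); congr pnorm.
by apply: funext => i; congr pnorm; apply: funext => j; rewrite mxE.
Qed.

Lemma blk_tens1mx (N n : nat) (B : 'M[R]_n) (u : 'cV[R]_(N * n)) (i : 'I_N) :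
  blk ((1%:M *t B) *m u) i = B *m blk u i.
Proof.
apply/matrixP => j z; rewrite [z]ord1 !mxE.
rewrite (reindex (@mxtens_index N n)) /=; last first.
  by exists (@mxtens_unindex N n) => k _; rewrite (mxtens_indexK, mxtens_unindexK).
pose F i' j' := (1%:M *t B) (mxtens_index (i, j)) (mxtens_index (i', j')) *
  u (mxtens_index (i', j')) 0.
rewrite (eq_bigr (fun k => F k.1 k.2)); last by case.
rewrite -(pair_bigA _ F) /F.
rewrite (bigD1 i) //= [X in _ + X]big1 ?addr0.
  by apply: eq_bigr => j' _; rewrite tensmxE !mxE eqxx mul1r.
move=> i' /negbTE ne_i'i; apply: big1 => j' _.
by rewrite tensmxE mxE eq_sym ne_i'i !mul0r.
Qed.

Lemma pQnorm_vpnorm (p : \bar R) (N n : nat) (Q : 'M[R]_n) (u : 'cV[R]_(N * n)) :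
  (1 <= p)%E -> pQnorm p Q u = vpnorm p ((1%:M *t Q) *m u).
Proof.
move=> hp; rewrite (vpnorm_blk _ hp); congr pnorm.
by apply: funext => i; rewrite blk_tens1mx.
Qed.

End BlockNorms.

Section Similarity.
Variables (R : realType) (m : nat) (nrm nrm' : 'cV[R]_m -> R) (T : 'M[R]_m).
Hypotheses (T_unit : T \in unitmx) (nrmT : forall u, nrm u = nrm' (T *m u)).

Lemma opnorm_commute (A : 'M[R]_m) :
  T *m A = A *m T -> opnorm nrm A = opnorm nrm' A.
Proof.
have T_neq0 x : (T *m x != 0) = (x != 0).
  apply/negb_inj; rewrite !negbK; apply/eqP/eqP => [Tx0|->]; last exact: mulmx0.
  by rewrite -(mul1mx x) -(mulVmx T_unit) -mulmxA Tx0 mulmx0.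
move=> TA; rewrite /opnorm; congr sup.
apply/seteqP; split => _ [x /= x_neq0 <-].
- exists (T *m x); first by rewrite /= T_neq0.
  by rewrite !nrmT !mulmxA TA.
- exists (invmx T *m x); first by rewrite /= -T_neq0 mulmxA mulmxV ?mul1mx.
  by rewrite !nrmT !mulmxA TA -(mulmxA A) !mulmxV // mulmx1 mul1mx.
Qed.

Lemma lognorm_commute (A : 'M[R]_m) :
  T *m A = A *m T -> lognorm nrm A = lognorm nrm' A.
Proof.
move=> TA; have opnormE h : opnorm nrm (1%:M + h *: A) = opnorm nrm' (1%:M + h *: A).
  apply: opnorm_commute.
  by rewrite mulmxDl mulmxDr mulmx1 mul1mx -scalemxAl -scalemxAr TA.
by rewrite /lognorm; under eq_fun => h do rewrite opnormE.
Qed.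

End Similarity.

Theorem lemma10 (R : realType) (n N : nat) (d q : 'rV[R]_n) (p : \bar R)
    (L : 'M[R]_N) :
  (forall j, 0 < d 0 j) -> (forall j, 0 < q 0 j) ->
  (1 <= p)%E ->
  L^T = L -> L *m (const_mx 1 : 'cV[R]_N) = 0 ->
  lognorm (@pQnorm R p N n (diag_mx q)) (- (L *t diag_mx d))
  = lognorm (@vpnorm R p (N * n)) (- (L *t diag_mx d)).
Proof.
move=> _ q_gt0 p_ge1 _ _.
apply: (@lognorm_commute _ _ _ _ (1%:M *t diag_mx q)).
- apply: tens1mx_unit; rewrite unitmxE det_diag unitfE.
  by apply/prodf_neq0 => j _; rewrite gt_eqF.
- by move=> u; apply: pQnorm_vpnorm.
- by rewrite mulmxN mulNmx !tensmx_mul mul1mx mulmx1 diag_mxC.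
Qed.
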